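(* Let $k\in\{0,1,-1\}$, let $c\neq0$, $m\ge0$ and $a_1,a_2,a_3$ be real, $\hat a=(a_1,a_2,a_3)^T$, and consider the complex system for $\hat K=(K_1,K_2,K_3)^T$, $\hat P=(P_1,P_2,P_3)^T$ in complex time $t$: $$\frac{d\hat K}{dt}=\hat K\times\omega(\hat K)+\hat P\times\hat a,\qquad \frac{d\hat P}{dt}=\hat P\times\omega(\hat K)+k\,(\hat K\times\hat a),\qquad \omega(\hat K)=\Big(\frac{m}{c}K_1,\frac{m}{c}K_2,\frac1cK_3\Big)^T.$$ Suppose a solution is given near $t=0$ by Laurent series $\hat K(t)=t^{-n_1}(K_0+K_1t+K_2t^2+\cdots)$, $\hat P(t)=t^{-n_2}(P_0+P_1t+\cdots)$ with $n_1,n_2$ positive integers, $K_n,P_n\in\mathbb{C}^3$, $K_0\neq0$, $P_0\neq0$. If $\omega(K_0)\times P_0\neq0$, then $n_1=1$ and $n_2=2$.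
   Context: $\times$ is the (complex bilinear) vector product on $\mathbb{C}^3$. The system is the complexification of the Hamiltonian equations for $H=\frac12\big(\frac{H_1^2}{c_1}+\frac{H_2^2}{c_2}+\frac{H_3^2}{c_3}\big)+a\cdot h$ with $c_1=c_2=c/m$, $c_3=c$ ($m=0$ meaning $1/c_1=1/c_2=0$). *)

From Stdlib Require Import Reals.
From Coquelicot Require Export Coquelicot.
Open Scope R_scope.

Definition vec : Type := (C * C * C)%type.
Definition VecNM : NormedModule C_AbsRing :=
  prod_NormedModule C_AbsRing
    (prod_NormedModule C_AbsRing C_NormedModule C_NormedModule) C_NormedModule.

Definition vmk (x y z : C) : vec := (x, y, z).
Definition v1 (u : vec) : C := fst (fst u).
Definition v2 (u : vec) : C := snd (fst u).
Definition v3 (u : vec) : C := snd u.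
Definition vzero : vec := vmk 0%C 0%C 0%C.
Definition vadd (u v : vec) : vec := vmk (v1 u + v1 v)%C (v2 u + v2 v)%C (v3 u + v3 v)%C.
Definition vscal (z : C) (u : vec) : vec := vmk (z * v1 u)%C (z * v2 u)%C (z * v3 u)%C.

Definition cross (u v : vec) : vec :=
  vmk (v2 u * v3 v - v3 u * v2 v)%C
      (v3 u * v1 v - v1 u * v3 v)%C
      (v1 u * v2 v - v2 u * v1 v)%C.

Definition omega (m c : R) (K : vec) : vec :=
  vmk (RtoC (m / c) * v1 K)%C (RtoC (m / c) * v2 K)%C (RtoC (1 / c) * v3 K)%C.

Definition rhsK (m c : R) (a : vec) (K P : vec) : vec :=
  vadd (cross K (omega m c K)) (cross P a).
Definition rhsP (k m c : R) (a : vec) (K P : vec) : vec :=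
  vadd (cross P (omega m c K)) (vscal (RtoC k) (cross K a)).

Definition laurent_on (r : R) (n : nat) (coef : nat -> vec) (f : C -> vec) : Prop :=
  forall t : C, 0 < Cmod t < r ->
    exists s : vec,
      @is_series C_AbsRing VecNM (fun j => vscal (Cpow t j) (coef j)) s /\
      f t = vscal (Cinv (Cpow t n)) s.

From Stdlib Require Import Reals Lra Lia Psatz.
From Coquelicot Require Import Coquelicot.
Open Scope R_scope.

(* Write K = t^-n1 G_K and P = t^-n2 G_P with power series G_K, G_P, G_K(0) = K0,
   G_P(0) = P0.  Power series are Lipschitz near 0, so G = G(0) + O(t) and
   t^(n1+1) K' = -n1 K0 + O(t), t^(n2+1) P' = -n2 P0 + O(t).  Multiplying the
   P-equation by t^(n1+n2+1) gives
     t^n1 (t^(n2+1) P') = t (G_P x omega(G_K) + k t^n2 G_K x a),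
   so n1 >= 2 would force P0 x omega(K0) = 0; hence n1 = 1 and
   P0 x omega(K0) = -n2 P0, which makes P0 isotropic: P0.P0 = 0.  With n1 = 1 the
   K-equation multiplied by t^(n2+2) reads
     t^n2 (t^2 K' - G_K x omega(G_K)) = t^2 (G_P x a).
   If n2 = 1 or a = 0 this forces K0 + K0 x omega(K0) = 0, hence K0 = 0; if n2 >= 3
   it forces P0 x a = 0, and an isotropic vector parallel to a real nonzero vector
   vanishes. *)

Lemma bounded_on_prefix (u : nat -> R) (N : nat) : exists M, forall n, (n <= N)%nat -> u n <= M.
Proof.
  induction N as [|N [M HM]].
  - exists (u 0%nat). intros n Hn. replace n with 0%nat by lia. lra.
  - exists (Rmax M (u (S N))). intros n Hn.
    destruct (Nat.eq_dec n (S N)) as [->|Hne]; [apply Rmax_r|].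
    eapply Rle_trans; [apply HM; lia | apply Rmax_l].
Qed.

Lemma sum_n_geom_half (K : R) (n : nat) : sum_n (fun j => K * (1/2) ^ j) n = K * (2 - (1/2) ^ n).
Proof.
  induction n as [|n IH]; [rewrite sum_O; simpl; lra|].
  rewrite sum_Sn, IH. change (plus ?x ?y) with (x + y). simpl. lra.
Qed.

Lemma S_INR_mul_quarter_pow_le (j : nat) : INR (S j) * (1/4) ^ j <= (1/2) ^ j.
Proof.
  induction j as [|j IH]; [simpl; lra|].
  rewrite S_INR. simpl pow.
  assert (1 <= INR (S j)) by (rewrite S_INR; pose proof (pos_INR j); lra).
  pose proof (pow_lt (1/4) j ltac:(lra)). nra.
Qed.

Lemma Cpow_sub_bound (t u : C) (rho : R) (j : nat) : Cmod t <= rho -> Cmod u <= rho ->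
  Cmod (Cpow t (S j) - Cpow u (S j)) <= INR (S j) * rho ^ j * Cmod (t - u).
Proof.
  intros Ht Hu. induction j as [|j IH].
  - simpl. replace (t * 1 - u * 1)%C with (t - u)%C by ring. lra.
  - replace (Cpow t (S (S j)) - Cpow u (S (S j)))%C
      with (t * (Cpow t (S j) - Cpow u (S j)) + (t - u) * Cpow u (S j))%C by (simpl; ring).
    eapply Rle_trans; [apply Cmod_triangle|]. rewrite !Cmod_mult, Cmod_pow.
    pose proof (Cmod_ge_0 t). pose proof (Cmod_ge_0 (t - u)). pose proof (Cmod_ge_0 u).
    assert (Cmod t * Cmod (Cpow t (S j) - Cpow u (S j))
            <= rho * (INR (S j) * rho ^ j * Cmod (t - u)))
      by (apply Rmult_le_compat; auto; apply Cmod_ge_0).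
    assert (Cmod (t - u) * Cmod u ^ S j <= Cmod (t - u) * rho ^ S j)
      by (apply Rmult_le_compat_l; auto; apply pow_incr; lra).
    rewrite (S_INR (S j)). simpl pow in *. lra.
Qed.

Lemma is_derive_Cpow (n : nat) (t : C) :
  @is_derive C_AbsRing (AbsRing_NormedModule C_AbsRing) (fun y => Cpow y n) t
    (RtoC (INR n) * Cpow t (pred n))%C.
Proof.
  induction n as [|n IH].
  - replace (RtoC (INR 0) * Cpow t (pred 0))%C with (RtoC 0) by (simpl; ring).
    exact (@is_derive_const C_AbsRing (AbsRing_NormedModule C_AbsRing) (RtoC 1) t).
  - assert (H := is_derive_mult (fun y => y) (fun y => Cpow y n) t _ _
                   (is_derive_id t) IH Cmult_comm).
    replace (RtoC (INR (S n)) * Cpow t (pred (S n)))%C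
      with (1 * Cpow t n + t * (RtoC (INR n) * Cpow t (pred n)))%C; [exact H|].
    destruct n as [|n]; [simpl; ring|].
    rewrite !S_INR, !RtoC_plus. simpl. ring.
Qed.

(** * Normed modules over C *)

Section NormedModuleC.
Context {V : NormedModule C_AbsRing}.

Lemma norm_scal_C (z : C) (v : V) : norm (scal z v) = Cmod z * norm v.
Proof.
  apply Rle_antisym; [exact (@norm_scal C_AbsRing V z v)|].
  destruct (Ceq_dec z 0) as [->|Hz]; [rewrite Cmod_0, Rmult_0_l; apply norm_ge_0|].
  assert (Hv : norm v <= / Cmod z * norm (scal z v)).
  { replace v with (scal (/ z)%C (scal z v)) at 1.
    - rewrite <- Cmod_inv by exact Hz. exact (@norm_scal C_AbsRing V _ _).
    - rewrite scal_assoc. change (mult (/ z) z)%C with (/ z * z)%C.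
      rewrite Cinv_l by exact Hz.
      exact (@scal_one C_Ring (NormedModule.ModuleSpace C_AbsRing V) v). }
  apply Cmod_gt_0 in Hz.
  apply Rmult_le_reg_l with (/ Cmod z); [apply Rinv_0_lt_compat; lra|].
  rewrite <- Rmult_assoc, Rinv_l by lra. lra.
Qed.

Lemma minus_plus_l (x y : V) : minus (plus x y) x = y.
Proof.
  unfold minus. rewrite (plus_comm x y), <- plus_assoc.
  rewrite (@plus_opp_r (NormedModule.AbelianGroup C_AbsRing V)).
  apply (@plus_zero_r (NormedModule.AbelianMonoid C_AbsRing V)).
Qed.

Lemma scal_minus_distr_r (x y : C) (v : V) :
  plus (scal x v) (opp (scal y v)) = scal (x - y)%C v.
Proof.
  unfold Cminus.
  rewrite (@scal_distr_r C_Ring (NormedModule.ModuleSpace C_AbsRing V)).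
  f_equal. change (- y)%C with (@opp C_Ring y).
  symmetry. apply (@scal_opp_l C_Ring (NormedModule.ModuleSpace C_AbsRing V)).
Qed.

Lemma is_series_terms_bounded (a : nat -> V) (s : V) :
  is_series a s -> exists M, forall n, norm (a n) <= M.
Proof.
  intros Hs.
  destruct (proj1 (filterlim_locally_ball_norm _ s) Hs (mkposreal 1 Rlt_0_1)) as [N HN].
  destruct (bounded_on_prefix (fun n => norm (a n)) N) as [M HM].
  exists (Rmax M 2). intros n. destruct (Compare_dec.le_lt_dec n N) as [Hn|Hn].
  - eapply Rle_trans; [apply HM, Hn | apply Rmax_l].
  - destruct n as [|p]; [lia|].
    assert (Hstep : ball_norm (sum_n a p) (1 + 1) (sum_n a (S p))).
    { apply ball_norm_triangle with s; [apply (ball_norm_sym _ _ (mkposreal 1 Rlt_0_1))|];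
        apply HN; lia. }
    unfold ball_norm in Hstep. rewrite sum_Sn, minus_plus_l in Hstep.
    pose proof (Rmax_r M 2). lra.
Qed.

Lemma norm_lim_le (u : nat -> V) (l : V) (B : R) :
  filterlim u eventually (locally l) -> (forall n, norm (u n) <= B) -> norm l <= B.
Proof.
  intros Hu HB.
  apply (is_lim_seq_le (fun n => norm (u n)) (fun _ => B) (norm l) B HB).
  - exact (filterlim_comp _ _ _ u norm _ _ _ Hu (filterlim_norm l)).
  - apply is_lim_seq_const.
Qed.

Lemma is_derive_norm_le (f : C -> V) (x : C) (D : V) (L d : R) :
  0 < d -> is_derive f x D ->
  (forall y, Cmod (y - x) < d -> norm (minus (f y) (f x)) <= L * Cmod (y - x)) ->
  norm D <= L.
Proof.
  intros Hd [_ Hdiff] Hlip. apply Rle_plus_epsilon. intros eps Heps.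
  destruct (@locally_le_locally_norm C_AbsRing (AbsRing_NormedModule C_AbsRing) x _
              (Hdiff x (fun P HP => HP) (mkposreal eps Heps))) as [delta Hdelta].
  set (h := Rmin delta d / 2).
  assert (Hh : 0 < h /\ h < delta /\ h < d).
  { pose proof (cond_pos delta). pose proof (Rmin_l delta d). pose proof (Rmin_r delta d).
    pose proof (Rmin_pos delta d ltac:(lra) Hd). unfold h. lra. }
  assert (Hyx : (x + RtoC h - x)%C = RtoC h) by ring.
  assert (Hmod : Cmod (RtoC h) = h) by (rewrite Cmod_R; apply Rabs_pos_eq; lra).
  specialize (Hdelta (x + RtoC h)%C).
  specialize (Hlip (x + RtoC h)%C). rewrite Hyx, Hmod in Hlip.
  change (minus (x + RtoC h)%C x) with (x + RtoC h - x)%C in Hdelta. rewrite Hyx in Hdelta.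
  change (norm (RtoC h)) with (Cmod (RtoC h)) in Hdelta. rewrite Hmod in Hdelta.
  assert (Hball : ball_norm x delta (x + RtoC h)%C).
  { change (Cmod (x + RtoC h - x) < delta). rewrite Hyx, Hmod. lra. }
  specialize (Hdelta Hball). specialize (Hlip ltac:(lra)).
  simpl in Hdelta. change (AbsRing.Ring C_AbsRing) with C_Ring in Hdelta.
  assert (Hscal : h * norm D <= L * h + eps * h).
  { rewrite <- Hmod, <- norm_scal_C, Hmod.
    pose proof (norm_triangle_inv (minus (f (x + RtoC h)%C) (f x)) (scal (RtoC h) D)) as T.
    apply Rabs_le_between in T. lra. }
  apply Rmult_le_reg_l with h; lra.
Qed.

Lemma power_series_at_0 (c : nat -> V) : is_series (fun j => scal (Cpow 0 j) (c j)) (c 0%nat).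
Proof.
  assert (E : forall n, sum_n (fun j => scal (Cpow 0 j) (c j)) n = c 0%nat).
  { induction n as [|n IH].
    - rewrite sum_O. exact (@scal_one C_Ring (NormedModule.ModuleSpace C_AbsRing V) (c 0%nat)).
    - rewrite sum_Sn, IH. replace (Cpow 0 (S n)) with (RtoC 0) by (simpl; ring).
      rewrite (@scal_zero_l C_Ring (NormedModule.ModuleSpace C_AbsRing V)).
      apply (@plus_zero_r (NormedModule.AbelianMonoid C_AbsRing V)). }
  eapply filterlim_ext; [intros n; symmetry; apply E | apply filterlim_const].
Qed.

(* Cauchy estimate |c_j| <= M / rho^j, then |t^j - u^j| <= j (rho/4)^(j-1) |t - u|. *)
Lemma power_series_term_diff_le (c : nat -> V) (rho M : R) (t u : C) (j : nat) :
  0 < rho -> 0 <= M -> norm (scal (Cpow (RtoC rho) j) (c j)) <= M ->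
  Cmod t <= rho / 4 -> Cmod u <= rho / 4 ->
  norm (scal (Cpow t j - Cpow u j)%C (c j)) <= 2 * M / rho * Cmod (t - u) * (1/2) ^ j.
Proof.
  intros Hrho HM0 HM Ht Hu.
  rewrite norm_scal_C, Cmod_pow, Cmod_R, Rabs_pos_eq in HM by lra. rewrite norm_scal_C.
  pose proof (Cmod_ge_0 (t - u)). pose proof (norm_ge_0 (c j)).
  pose proof (Rinv_0_lt_compat rho Hrho).
  destruct j as [|j].
  - replace (Cpow t 0 - Cpow u 0)%C with (RtoC 0) by (simpl; ring).
    rewrite Cmod_0, Rmult_0_l. simpl. unfold Rdiv.
    apply Rmult_le_pos; [|lra]. apply Rmult_le_pos; [|lra]. apply Rmult_le_pos; lra.
  - pose proof (pow_lt rho j Hrho).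
    assert (Hcoef : norm (c (S j)) <= M / rho ^ S j).
    { apply Rmult_le_reg_l with (rho ^ S j); [apply pow_lt, Hrho|].
      field_simplify; [lra | apply pow_nonzero; lra]. }
    eapply Rle_trans; [apply Rmult_le_compat;
      [apply Cmod_ge_0 | lra | exact (Cpow_sub_bound t u (rho / 4) j Ht Hu) | exact Hcoef]|].
    replace (rho / 4) with (rho * (1/4)) by lra. rewrite Rpow_mult_distr. simpl pow.
    replace (INR (S j) * (rho ^ j * (1 / 4) ^ j) * Cmod (t - u) * (M / (rho * rho ^ j)))
      with ((INR (S j) * (1/4) ^ j) * (M * Cmod (t - u) / rho)) by (field; lra).
    replace (2 * M / rho * Cmod (t - u) * (1 / 2 * (1 / 2) ^ j))
      with ((1/2) ^ j * (M * Cmod (t - u) / rho)) by (field; lra).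
    apply Rmult_le_compat_r; [|apply S_INR_mul_quarter_pow_le].
    apply Rmult_le_pos; [nra | lra].
Qed.

Lemma power_series_lipschitz (c : nat -> V) (rho M : R) : 0 < rho ->
  (forall j, norm (scal (Cpow (RtoC rho) j) (c j)) <= M) ->
  forall t u st su, Cmod t <= rho / 4 -> Cmod u <= rho / 4 ->
  is_series (fun j => scal (Cpow t j) (c j)) st ->
  is_series (fun j => scal (Cpow u j) (c j)) su ->
  norm (minus st su) <= 4 * M / rho * Cmod (t - u).
Proof.
  intros Hrho HM t u st su Ht Hu Hst Hsu.
  assert (HM0 : 0 <= M)
    by (pose proof (HM 0%nat); pose proof (norm_ge_0 (scal (Cpow (RtoC rho) 0) (c 0%nat))); lra).
  set (K := 2 * M / rho * Cmod (t - u)).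
  assert (HK : 0 <= K).
  { unfold K, Rdiv. pose proof (Cmod_ge_0 (t - u)). pose proof (Rinv_0_lt_compat rho Hrho).
    apply Rmult_le_pos; [apply Rmult_le_pos|]; lra. }
  apply (norm_lim_le _ _ _ (is_series_minus _ _ _ _ Hst Hsu)). intros n.
  eapply Rle_trans; [apply (norm_sum_n_m _ 0 n)|].
  eapply Rle_trans; [apply (sum_n_m_le _ (fun j => K * (1/2) ^ j))|].
  - intros j.
    replace (norm _) with (norm (scal (Cpow t j - Cpow u j)%C (c j)))
      by (f_equal; symmetry; apply scal_minus_distr_r).
    exact (power_series_term_diff_le c rho M t u j Hrho HM0 (HM j) Ht Hu).
  - change (sum_n_m (fun j => K * (1/2) ^ j) 0 n) with (sum_n (fun j => K * (1/2) ^ j) n).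
    rewrite sum_n_geom_half. pose proof (pow_lt (1/2) n ltac:(lra)).
    replace (4 * M / rho * Cmod (t - u)) with (2 * K) by (unfold K; field; lra). nra.
Qed.

Lemma power_series_lipschitz_near0 (c : nat -> V) (r : R) : 0 < r ->
  (forall t, 0 < Cmod t < r -> exists s, is_series (fun j => scal (Cpow t j) (c j)) s) ->
  exists d L, 0 < d /\ d < r /\ forall t u st su, Cmod t <= d -> Cmod u <= d ->
    is_series (fun j => scal (Cpow t j) (c j)) st ->
    is_series (fun j => scal (Cpow u j) (c j)) su ->
    norm (minus st su) <= L * Cmod (t - u).
Proof.
  intros Hr Hser.
  destruct (Hser (RtoC (r / 2))) as [s Hs]; [rewrite Cmod_R, Rabs_pos_eq; lra|].
  destruct (is_series_terms_bounded _ _ Hs) as [M HM].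
  exists (r / 8), (4 * M / (r / 2)). split; [lra|]. split; [lra|].
  intros t u st su Ht Hu. apply power_series_lipschitz; [lra | exact HM | lra | lra].
Qed.

End NormedModuleC.

(** * Asymptotics at a puncture *)

Definition Ot (g : C -> C) : Prop :=
  exists d B, 0 < d /\ forall t, 0 < Cmod t < d -> Cmod (g t) <= B * Cmod t.

Definition is_lim_Ot (g : C -> C) (a : C) : Prop := Ot (fun t => g t - a)%C.

Lemma Ot_ext (g h : C -> C) (r : R) : 0 < r ->
  (forall t, 0 < Cmod t < r -> g t = h t) -> Ot g -> Ot h.
Proof.
  intros Hr E [d [B [Hd H]]]. exists (Rmin d r), B. split; [apply Rmin_pos; lra|].
  intros t Ht. pose proof (Rmin_l d r). pose proof (Rmin_r d r).
  rewrite <- E by lra. apply H. lra.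
Qed.

Lemma Ot_add (g h : C -> C) : Ot g -> Ot h -> Ot (fun t => g t + h t)%C.
Proof.
  intros [d1 [B1 [Hd1 H1]]] [d2 [B2 [Hd2 H2]]].
  exists (Rmin d1 d2), (B1 + B2). split; [apply Rmin_pos; lra|].
  intros t Ht. pose proof (Rmin_l d1 d2). pose proof (Rmin_r d1 d2).
  eapply Rle_trans; [apply Cmod_triangle|].
  pose proof (H1 t ltac:(lra)). pose proof (H2 t ltac:(lra)). lra.
Qed.

Lemma Ot_mul_bounded (g h : C -> C) (d0 M : R) : 0 < d0 ->
  (forall t, 0 < Cmod t < d0 -> Cmod (h t) <= M) -> Ot g -> Ot (fun t => h t * g t)%C.
Proof.
  intros Hd0 Hh [d [B [Hd Hg]]].
  exists (Rmin d d0), (Rabs M * B). split; [apply Rmin_pos; lra|].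
  intros t Ht. pose proof (Rmin_l d d0). pose proof (Rmin_r d d0).
  rewrite Cmod_mult, Rmult_assoc.
  pose proof (Hh t ltac:(lra)). pose proof (Hg t ltac:(lra)). pose proof (Rle_abs M).
  apply Rmult_le_compat; [apply Cmod_ge_0 | apply Cmod_ge_0 | lra | assumption].
Qed.

Lemma Ot_const_eq0 (a : C) : Ot (fun _ => a) -> a = 0%C.
Proof.
  intros [d [B [Hd H]]].
  destruct (Ceq_dec a 0) as [|Ha]; [assumption|exfalso].
  apply Cmod_gt_0 in Ha. pose proof (Rabs_pos B). pose proof (Rle_abs B).
  set (e := Cmod a / (2 * (Rabs B + 1))).
  assert (He : 0 < e) by (apply Rdiv_lt_0_compat; lra).
  assert (HBe : (Rabs B + 1) * e = Cmod a / 2) by (unfold e; field; lra).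
  pose proof (Rmin_l (d / 2) e). pose proof (Rmin_r (d / 2) e).
  set (tau := Rmin (d / 2) e) in *.
  assert (Htau : 0 < tau) by (apply Rmin_pos; lra).
  assert (Hmod : Cmod (RtoC tau) = tau) by (rewrite Cmod_R; apply Rabs_pos_eq; lra).
  specialize (H tau). rewrite Hmod in H. specialize (H ltac:(lra)).
  assert ((Rabs B + 1) * tau <= (Rabs B + 1) * e) by (apply Rmult_le_compat_l; lra).
  nra.
Qed.

Lemma is_lim_Ot_ext (g h : C -> C) (a : C) (r : R) : 0 < r ->
  (forall t, 0 < Cmod t < r -> g t = h t) -> is_lim_Ot g a -> is_lim_Ot h a.
Proof. intros Hr E. eapply (Ot_ext _ _ r); [exact Hr|]. intros t Ht. now rewrite E. Qed.

Lemma is_lim_Ot_bounded (g : C -> C) (a : C) :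
  is_lim_Ot g a -> exists d M, 0 < d /\ forall t, 0 < Cmod t < d -> Cmod (g t) <= M.
Proof.
  intros [d [B [Hd H]]]. exists (Rmin d 1), (Rabs B + Cmod a). split; [apply Rmin_pos; lra|].
  intros t Ht. pose proof (Rmin_l d 1). pose proof (Rmin_r d 1).
  replace (g t) with ((g t - a) + a)%C by ring.
  eapply Rle_trans; [apply Cmod_triangle|].
  pose proof (H t ltac:(lra)). pose proof (Rle_abs B). pose proof (Rabs_pos B). nra.
Qed.

Lemma is_lim_Ot_const (a : C) : is_lim_Ot (fun _ => a) a.
Proof.
  exists 1, 0. split; [lra|]. intros t _.
  replace (a - a)%C with (RtoC 0) by ring. rewrite Cmod_0. lra.
Qed.

Lemma is_lim_Ot_id : is_lim_Ot (fun t => t) 0.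
Proof.
  exists 1, 1. split; [lra|]. intros t _. replace (t - 0)%C with t by ring. lra.
Qed.

Lemma is_lim_Ot_add (g h : C -> C) (a b : C) :
  is_lim_Ot g a -> is_lim_Ot h b -> is_lim_Ot (fun t => g t + h t)%C (a + b).
Proof.
  intros Hg Hh. eapply (Ot_ext _ _ 1); [lra| |exact (Ot_add _ _ Hg Hh)].
  intros t _. cbv beta. ring.
Qed.

Lemma is_lim_Ot_mul (g h : C -> C) (a b : C) :
  is_lim_Ot g a -> is_lim_Ot h b -> is_lim_Ot (fun t => g t * h t)%C (a * b).
Proof.
  intros Hg Hh.
  destruct (is_lim_Ot_bounded g a Hg) as [d [M [Hd HM]]].
  assert (Hb : forall t, 0 < Cmod t < 1 -> Cmod ((fun _ => b) t) <= Cmod b) by (intros; lra).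
  pose proof (Ot_add _ _ (Ot_mul_bounded _ _ d M Hd HM Hh) (Ot_mul_bounded _ _ 1 _ Rlt_0_1 Hb Hg)).
  eapply (Ot_ext _ _ 1); [lra| |eassumption]. intros t _. cbv beta. ring.
Qed.

Lemma is_lim_Ot_sub (g h : C -> C) (a b : C) :
  is_lim_Ot g a -> is_lim_Ot h b -> is_lim_Ot (fun t => g t - h t)%C (a - b).
Proof.
  intros Hg Hh.
  pose proof (is_lim_Ot_add _ _ _ _ Hg (is_lim_Ot_mul _ _ _ _ (is_lim_Ot_const (Copp 1)) Hh)).
  eapply (Ot_ext _ _ 1); [lra| |eassumption]. intros t _. cbv beta. ring.
Qed.

Lemma is_lim_Ot_Cpow (n : nat) : is_lim_Ot (fun t => Cpow t n) (Cpow 0 n).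
Proof.
  induction n as [|n IH]; [exact (is_lim_Ot_const 1)|].
  exact (is_lim_Ot_mul _ _ _ _ is_lim_Ot_id IH).
Qed.

Lemma is_lim_Ot_unique (g : C -> C) (a b : C) : is_lim_Ot g a -> is_lim_Ot g b -> a = b.
Proof.
  intros Ha Hb.
  assert (H : Ot (fun _ => b - a)%C).
  { eapply (Ot_ext _ _ 1); [lra| |exact (is_lim_Ot_sub _ _ _ _ Ha Hb)].
    intros t _. cbv beta. ring. }
  apply Ot_const_eq0 in H. replace b with (b - a + a)%C by ring. rewrite H. ring.
Qed.

Lemma is_lim_Ot_cancel_pow (X Y : C -> C) (x y : C) (p q : nat) (r : R) :
  (q <= p)%nat -> 0 < r ->
  (forall t, 0 < Cmod t < r -> Cpow t p * X t = Cpow t q * Y t)%C ->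
  is_lim_Ot X x -> is_lim_Ot Y y -> y = (Cpow 0 (p - q) * x)%C.
Proof.
  intros Hqp Hr E HX HY. apply (is_lim_Ot_unique Y); [exact HY|].
  apply is_lim_Ot_ext with (fun t => Cpow t (p - q) * X t)%C r;
    [exact Hr| |exact (is_lim_Ot_mul _ _ _ _ (is_lim_Ot_Cpow _) HX)].
  intros t Ht. cbv beta.
  assert (Hq : Cpow t q <> 0%C) by (apply Cpow_nz; intros ->; rewrite Cmod_0 in Ht; lra).
  replace (Y t) with (/ Cpow t q * (Cpow t p * X t))%C
    by (rewrite E by exact Ht; field; exact Hq).
  replace (Cpow t p) with (Cpow t q * Cpow t (p - q))%C
    by (rewrite <- Cpow_add_r; f_equal; lia).
  field. exact Hq.
Qed.

(** * Vectors of C^3 *)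

Lemma vec_eq (u w : vec) : v1 u = v1 w -> v2 u = v2 w -> v3 u = v3 w -> u = w.
Proof. destruct u as [[x y] z], w as [[x' y'] z']. cbn. intros -> -> ->. reflexivity. Qed.

Ltac vec_ring :=
  apply vec_eq; cbn [v1 v2 v3 vmk vzero vadd vscal cross omega rhsK rhsP fst snd Cpow Nat.sub];
  ring.

(* For goals stated with the normed-module operations of [VecNM]. *)
Ltac vecNM_ring :=
  apply vec_eq; unfold vadd, vscal, vmk, vzero, v1, v2, v3; simpl;
  unfold minus, plus, opp, scal; simpl; unfold mult; simpl; ring.

Lemma minus_vzero (u : vec) : @minus (NormedModule.AbelianGroup C_AbsRing VecNM) u vzero = u.
Proof. vecNM_ring. Qed.

Lemma prod_norm_ge {K : AbsRing} {U W : NormedModule K} (x : U * W) :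
  norm (fst x) <= prod_norm x /\ norm (snd x) <= prod_norm x.
Proof.
  destruct (sqrt_plus_sqr (norm (fst x)) (norm (snd x))) as [H _].
  rewrite !Rabs_pos_eq in H by apply norm_ge_0.
  pose proof (Rmax_l (norm (fst x)) (norm (snd x))).
  pose proof (Rmax_r (norm (fst x)) (norm (snd x))).
  unfold prod_norm. lra.
Qed.

Lemma vec_norm_ge (u : vec) : Cmod (v1 u) <= @norm C_AbsRing VecNM u /\
  Cmod (v2 u) <= @norm C_AbsRing VecNM u /\ Cmod (v3 u) <= @norm C_AbsRing VecNM u.
Proof.
  destruct (prod_norm_ge (U := prod_NormedModule C_AbsRing C_NormedModule C_NormedModule)
              (W := C_NormedModule) u) as [H12 H3].
  destruct (prod_norm_ge (U := C_NormedModule) (W := C_NormedModule) (fst u)) as [H1 H2].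
  split; [|split]; [eapply Rle_trans; [exact H1 | exact H12]
                   | eapply Rle_trans; [exact H2 | exact H12] | exact H3].
Qed.

Definition dot (u v : vec) : C := (v1 u * v1 v + v2 u * v2 v + v3 u * v3 v)%C.

Lemma cross_anticomm (u v : vec) : cross u v = vscal (- 1) (cross v u).
Proof. vec_ring. Qed.

Lemma dot_cross_self (u v : vec) : dot u (cross u v) = 0%C.
Proof. unfold dot. cbn [v1 v2 v3 cross vmk fst snd]. ring. Qed.

Lemma lagrange_identity (u v : vec) :
  (dot u v * dot u v = dot u u * dot v v - dot (cross u v) (cross u v))%C.
Proof. unfold dot. cbn [v1 v2 v3 cross vmk fst snd]. ring. Qed.

Lemma cross_cross_self (u v : vec) :
  cross v (cross u v) = vadd (vscal (dot v v) u) (vscal (- dot v u) v).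
Proof. unfold dot. vec_ring. Qed.

Lemma vscal_eq_vzero (z : C) (u : vec) : z <> 0%C -> vscal z u = vzero -> u = vzero.
Proof.
  intros Hz E.
  replace u with (vscal (/ z) (vscal z u))
    by (apply vec_eq; cbn [v1 v2 v3 vscal vmk fst snd]; field; exact Hz).
  rewrite E. vec_ring.
Qed.

Lemma isotropic_of_cross_eigen (u w : vec) (z : C) : z <> 0%C ->
  cross u w = vscal z u -> dot u u = 0%C.
Proof.
  intros Hz E.
  assert (H : (z * dot u u)%C = 0%C).
  { rewrite <- (dot_cross_self u w), E. unfold dot. cbn [v1 v2 v3 vscal vmk fst snd]. ring. }
  replace (dot u u) with (/ z * (z * dot u u))%C by (field; exact Hz).
  rewrite H. ring.
Qed.

Lemma isotropic_cross_eq0 (u v : vec) :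
  dot u u = 0%C -> cross u v = vzero -> dot v v <> 0%C -> u = vzero.
Proof.
  intros Huu Huv Hvv.
  assert (Hvu : dot v u = 0%C).
  { assert (Hsq : (dot u v * dot u v)%C = 0%C)
      by (rewrite lagrange_identity, Huu, Huv; unfold dot; cbn [v1 v2 v3 vzero vmk fst snd]; ring).
    replace (dot v u) with (dot u v) by (unfold dot; ring).
    destruct (Ceq_dec (dot u v) 0) as [|Hne]; [assumption|].
    replace (dot u v) with (/ dot u v * (dot u v * dot u v))%C by (field; exact Hne).
    rewrite Hsq. ring. }
  apply (vscal_eq_vzero (dot v v)); [exact Hvv|].
  transitivity (cross v (cross u v)); [rewrite cross_cross_self, Hvu; vec_ring|].
  rewrite Huv. vec_ring.
Qed.

(* The first two components of [omega m c u] are those of [u] times the same factor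
   m/c, so the third component of [cross u (omega m c u)] vanishes. *)
Lemma cross_omega_self_fixed (m c : R) (u : vec) :
  vadd u (cross u (omega m c u)) = vzero -> u = vzero.
Proof.
  intros E.
  assert (E3 := f_equal v3 E). cbn [v1 v2 v3 vadd cross omega vmk vzero fst snd] in E3.
  assert (H3 : v3 u = 0%C) by (rewrite <- E3; ring).
  assert (E1 := f_equal v1 E). assert (E2 := f_equal v2 E).
  cbn [v1 v2 v3 vadd cross omega vmk vzero fst snd] in E1, E2. rewrite H3 in E1, E2.
  apply vec_eq; cbn [v1 v2 v3 vmk vzero fst snd]; [rewrite <- E1 | rewrite <- E2 | exact H3]; ring.
Qed.

Lemma Copp_INR_neq0 (n : nat) : (0 < n)%nat -> (- RtoC (INR n))%C <> 0%C.
Proof.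
  intros Hn E. apply (f_equal fst) in E. cbn [fst Copp RtoC] in E.
  pose proof (lt_0_INR n Hn). lra.
Qed.

Definition is_vlim_Ot (F : C -> vec) (x : vec) : Prop :=
  is_lim_Ot (fun t => v1 (F t)) (v1 x) /\ is_lim_Ot (fun t => v2 (F t)) (v2 x) /\
  is_lim_Ot (fun t => v3 (F t)) (v3 x).

Lemma is_vlim_Ot_const (x : vec) : is_vlim_Ot (fun _ => x) x.
Proof. repeat split; apply is_lim_Ot_const. Qed.

Lemma is_vlim_Ot_add (F G : C -> vec) (x y : vec) :
  is_vlim_Ot F x -> is_vlim_Ot G y -> is_vlim_Ot (fun t => vadd (F t) (G t)) (vadd x y).
Proof. intros (F1 & F2 & F3) (G1 & G2 & G3). repeat split; apply is_lim_Ot_add; assumption. Qed.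

Lemma is_vlim_Ot_scal (s : C -> C) (F : C -> vec) (z : C) (x : vec) :
  is_lim_Ot s z -> is_vlim_Ot F x -> is_vlim_Ot (fun t => vscal (s t) (F t)) (vscal z x).
Proof. intros Hs (F1 & F2 & F3). repeat split; apply is_lim_Ot_mul; assumption. Qed.

Lemma is_vlim_Ot_cross (F G : C -> vec) (x y : vec) :
  is_vlim_Ot F x -> is_vlim_Ot G y -> is_vlim_Ot (fun t => cross (F t) (G t)) (cross x y).
Proof.
  intros (F1 & F2 & F3) (G1 & G2 & G3). cbn [is_vlim_Ot v1 v2 v3 cross vmk fst snd].
  repeat split; apply is_lim_Ot_sub; apply is_lim_Ot_mul; assumption.
Qed.

Lemma is_vlim_Ot_omega (m c : R) (F : C -> vec) (x : vec) :
  is_vlim_Ot F x -> is_vlim_Ot (fun t => omega m c (F t)) (omega m c x).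
Proof.
  intros (F1 & F2 & F3). cbn [is_vlim_Ot v1 v2 v3 omega vmk fst snd].
  repeat split; apply is_lim_Ot_mul; (apply is_lim_Ot_const || assumption).
Qed.

Lemma is_vlim_Ot_ext (F G : C -> vec) (x : vec) (r : R) : 0 < r ->
  (forall t, 0 < Cmod t < r -> F t = G t) -> is_vlim_Ot F x -> is_vlim_Ot G x.
Proof.
  intros Hr E (F1 & F2 & F3).
  repeat split; eapply is_lim_Ot_ext; try eassumption; intros t Ht; cbv beta; now rewrite E.
Qed.

Lemma is_vlim_Ot_of_norm (F : C -> vec) (x : vec) (d L : R) : 0 < d ->
  (forall t, 0 < Cmod t < d -> @norm C_AbsRing VecNM (minus (F t) x) <= L * Cmod t) ->
  is_vlim_Ot F x.
Proof.
  intros Hd H. repeat split; exists d, L; split; try exact Hd; intros t Ht;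
    destruct (vec_norm_ge (minus (F t) x)) as (N1 & N2 & N3);
    eapply Rle_trans; [eassumption | exact (H t Ht) | eassumption | exact (H t Ht)
                      | eassumption | exact (H t Ht)].
Qed.

Lemma is_vlim_Ot_cancel_pow (X Y : C -> vec) (x y : vec) (p q : nat) (r : R) :
  (q <= p)%nat -> 0 < r ->
  (forall t, 0 < Cmod t < r -> vscal (Cpow t p) (X t) = vscal (Cpow t q) (Y t)) ->
  is_vlim_Ot X x -> is_vlim_Ot Y y -> y = vscal (Cpow 0 (p - q)) x.
Proof.
  intros Hqp Hr E (X1 & X2 & X3) (Y1 & Y2 & Y3).
  apply vec_eq; cbn [v1 v2 v3 vscal vmk fst snd];
    (eapply is_lim_Ot_cancel_pow; [exact Hqp | exact Hr | | eassumption | eassumption]);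
    intros t Ht; specialize (E t Ht).
  - exact (f_equal v1 E).
  - exact (f_equal v2 E).
  - exact (f_equal v3 E).
Qed.

Lemma is_vlim_Ot_cancel_pow_eq (X Y : C -> vec) (x y : vec) (p : nat) (r : R) : 0 < r ->
  (forall t, 0 < Cmod t < r -> vscal (Cpow t p) (X t) = vscal (Cpow t p) (Y t)) ->
  is_vlim_Ot X x -> is_vlim_Ot Y y -> x = y.
Proof.
  intros Hr E HX HY. rewrite (is_vlim_Ot_cancel_pow X Y x y p p r (le_n p) Hr E HX HY).
  rewrite Nat.sub_diag. vec_ring.
Qed.

Lemma is_vlim_Ot_cancel_pow_lt (X Y : C -> vec) (x y : vec) (p q : nat) (r : R) :
  (q < p)%nat -> 0 < r ->
  (forall t, 0 < Cmod t < r -> vscal (Cpow t p) (X t) = vscal (Cpow t q) (Y t)) ->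
  is_vlim_Ot X x -> is_vlim_Ot Y y -> y = vzero.
Proof.
  intros Hqp Hr E HX HY. rewrite (is_vlim_Ot_cancel_pow X Y x y p q r ltac:(lia) Hr E HX HY).
  destruct (p - q)%nat as [|j] eqn:Hj; [lia | vec_ring].
Qed.

Ltac lim_Ot :=
  lazymatch goal with
  | |- is_lim_Ot (fun t => Cmult (@?g t) (@?h t)) _ => apply is_lim_Ot_mul; lim_Ot
  | |- is_lim_Ot (fun t => Cpow t _) _ => apply is_lim_Ot_Cpow
  | |- is_lim_Ot (fun _ => _) _ => apply is_lim_Ot_const
  end.

(* Syntactic dispatch: letting [apply]/[eassumption] unify limits up to conversion
   unfolds [cross] and [omega] and is very slow. *)
Ltac vlim_Ot :=
  lazymatch goal with
  | H : is_vlim_Ot ?F _ |- is_vlim_Ot ?F _ => exact H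
  | |- is_vlim_Ot (fun t => vadd (@?F t) (@?G t)) _ => apply is_vlim_Ot_add; vlim_Ot
  | |- is_vlim_Ot (fun t => cross (@?F t) (@?G t)) _ => apply is_vlim_Ot_cross; vlim_Ot
  | |- is_vlim_Ot (fun t => omega _ _ (@?F t)) _ => apply is_vlim_Ot_omega; vlim_Ot
  | |- is_vlim_Ot (fun t => vscal (@?s t) (@?F t)) _ => apply is_vlim_Ot_scal; [lim_Ot | vlim_Ot]
  | |- is_vlim_Ot (fun _ => _) _ => apply is_vlim_Ot_const
  end.

(** * Laurent expansions *)

Lemma laurent_on_series (r : R) (n : nat) (c : nat -> vec) (f : C -> vec) :
  laurent_on r n c f -> forall t, 0 < Cmod t < r ->
  @is_series C_AbsRing VecNM (fun j => vscal (Cpow t j) (c j)) (vscal (Cpow t n) (f t)).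
Proof.
  intros Hf t Ht. destruct (Hf t Ht) as [s [Hs ->]].
  assert (Hn : Cpow t n <> 0%C) by (apply Cpow_nz; intros ->; rewrite Cmod_0 in Ht; lra).
  replace (vscal (Cpow t n) (vscal (/ Cpow t n) s)) with s; [exact Hs|].
  apply vec_eq; cbn [v1 v2 v3 vscal vmk fst snd]; field; exact Hn.
Qed.

Lemma is_derive_vscal_Cpow (n : nat) (f : C -> vec) (t : C) (Df : vec) :
  @is_derive C_AbsRing VecNM f t Df ->
  @is_derive C_AbsRing VecNM (fun y => vscal (Cpow y n) (f y)) t
    (vadd (vscal (RtoC (INR n) * Cpow t (pred n))%C (f t)) (vscal (Cpow t n) Df)).
Proof.
  intros Hf. eapply filterdiff_ext_lin.
  - exact (@filterdiff_scal_fct C_AbsRing (AbsRing_NormedModule C_AbsRing) VecNM t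
             (fun y => Cpow y n) f _ _ Cmult_comm (is_derive_Cpow n t) Hf).
  - intros y. vecNM_ring.
Qed.

(* [t^(S n) D + n t^n f] is [t] times the derivative of the power series [t^n f],
   which is bounded near 0 because that series is Lipschitz there. *)
Lemma laurent_on_estimates (r : R) (n : nat) (c : nat -> vec) (f D : C -> vec) : 0 < r ->
  laurent_on r n c f -> (forall t, 0 < Cmod t < r -> @is_derive C_AbsRing VecNM f t (D t)) ->
  exists d L, 0 < d /\ forall t, 0 < Cmod t < d ->
    @norm C_AbsRing VecNM (minus (vscal (Cpow t n) (f t)) (c 0%nat)) <= L * Cmod t /\
    @norm C_AbsRing VecNM
      (vadd (vscal (Cpow t (S n)) (D t)) (vscal (RtoC (INR n)) (vscal (Cpow t n) (f t))))
      <= L * Cmod t.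
Proof.
  intros Hr Hf HD.
  pose proof (laurent_on_series r n c f Hf) as Hser.
  destruct (power_series_lipschitz_near0 c r Hr (fun t Ht => ex_intro _ _ (Hser t Ht)))
    as [d [L [Hd [Hdr Hlip]]]].
  exists d, L. split; [exact Hd|]. intros t Ht. split.
  - replace (Cmod t) with (Cmod (t - 0)) by (f_equal; ring).
    apply Hlip; [lra | rewrite Cmod_0; lra | apply Hser; lra | apply power_series_at_0].
  - pose proof (is_derive_vscal_Cpow n f t (D t) (HD t ltac:(lra))) as HDS.
    set (DS := vadd _ _) in HDS.
    assert (HDSb : @norm C_AbsRing VecNM DS <= L).
    { apply (@is_derive_norm_le VecNM (fun y => vscal (Cpow y n) (f y)) t DS L
               (Rmin (Cmod t) (d - Cmod t))); [apply Rmin_pos; lra | exact HDS|].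
      intros y Hy.
      pose proof (Rmin_l (Cmod t) (d - Cmod t)). pose proof (Rmin_r (Cmod t) (d - Cmod t)).
      assert (Cmod y <= Cmod t + Cmod (y - t))
        by (replace y with (t + (y - t))%C at 1 by ring; apply Cmod_triangle).
      assert (Cmod t <= Cmod y + Cmod (y - t)).
      { replace t with (y - (y - t))%C at 1 by ring.
        eapply Rle_trans; [apply Cmod_triangle | rewrite Cmod_opp; lra]. }
      apply Hlip; [lra | lra | apply Hser; lra | apply Hser; lra]. }
    replace (vadd _ _) with (@scal C_Ring (NormedModule.ModuleSpace C_AbsRing VecNM) t DS).
    + rewrite norm_scal_C, Rmult_comm. apply Rmult_le_compat_r; [apply Cmod_ge_0 | exact HDSb].
    + unfold DS. destruct n as [|n]; vecNM_ring.
Qed.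

Lemma laurent_on_limits (r : R) (n : nat) (c : nat -> vec) (f D : C -> vec) : 0 < r ->
  laurent_on r n c f -> (forall t, 0 < Cmod t < r -> @is_derive C_AbsRing VecNM f t (D t)) ->
  is_vlim_Ot (fun t => vscal (Cpow t n) (f t)) (c 0%nat) /\
  is_vlim_Ot (fun t => vscal (Cpow t (S n)) (D t)) (vscal (- RtoC (INR n)) (c 0%nat)).
Proof.
  intros Hr Hf HD.
  destruct (laurent_on_estimates r n c f D Hr Hf HD) as [d [L [Hd H]]].
  assert (HG : is_vlim_Ot (fun t => vscal (Cpow t n) (f t)) (c 0%nat))
    by (apply (is_vlim_Ot_of_norm _ _ d L Hd); intros t Ht; exact (proj1 (H t Ht))).
  assert (HE : is_vlim_Ot (fun t => vadd (vscal (Cpow t (S n)) (D t))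
                                       (vscal (RtoC (INR n)) (vscal (Cpow t n) (f t)))) vzero).
  { apply (is_vlim_Ot_of_norm _ _ d L Hd). intros t Ht.
    rewrite minus_vzero. exact (proj2 (H t Ht)). }
  split; [exact HG|].
  replace (vscal (- RtoC (INR n)) (c 0%nat))
    with (vadd vzero (vscal (- RtoC (INR n)) (c 0%nat))) by vec_ring.
  eapply (is_vlim_Ot_ext _ _ _ 1); [lra| |exact (is_vlim_Ot_add _ _ _ _ HE
    (is_vlim_Ot_scal _ _ _ _ (is_lim_Ot_const (- RtoC (INR n))) HG))].
  intros t _. vec_ring.
Qed.

(** * Pole orders of the solution *)

Section Solution.

Variables (k m c a1 a2 a3 r : R) (Kf Pf : C -> vec) (Kc Pc : nat -> vec).
Local Notation a := (vmk (RtoC a1) (RtoC a2) (RtoC a3)).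
Hypothesis r_pos : 0 < r.
Hypothesis solution : forall t, 0 < Cmod t < r ->
  @is_derive C_AbsRing VecNM Kf t (rhsK m c a (Kf t) (Pf t)) /\
  @is_derive C_AbsRing VecNM Pf t (rhsP k m c a (Kf t) (Pf t)).

Lemma pole_order_K_eq1 (n1 n2 : nat) : (0 < n1)%nat -> (0 < n2)%nat ->
  laurent_on r n1 Kc Kf -> laurent_on r n2 Pc Pf ->
  cross (omega m c (Kc 0%nat)) (Pc 0%nat) <> vzero ->
  n1 = 1%nat /\ cross (Pc 0%nat) (omega m c (Kc 0%nat)) = vscal (- RtoC (INR n2)) (Pc 0%nat).
Proof.
  intros Hn1 Hn2 HK HP Hcross.
  destruct (laurent_on_limits r n1 Kc Kf _ r_pos HK (fun t Ht => proj1 (solution t Ht)))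
    as [HGK _].
  destruct (laurent_on_limits r n2 Pc Pf _ r_pos HP (fun t Ht => proj2 (solution t Ht)))
    as [HGP HXP].
  assert (HY : is_vlim_Ot
    (fun t => vadd (cross (vscal (Cpow t n2) (Pf t)) (omega m c (vscal (Cpow t n1) (Kf t))))
                   (vscal (RtoC k * Cpow t n2) (cross (vscal (Cpow t n1) (Kf t)) a)))
    (cross (Pc 0%nat) (omega m c (Kc 0%nat)))).
  { replace (cross (Pc 0%nat) (omega m c (Kc 0%nat))) with
      (vadd (cross (Pc 0%nat) (omega m c (Kc 0%nat)))
            (vscal (RtoC k * Cpow 0 n2) (cross (Kc 0%nat) a)))
      by (destruct n2; [lia | vec_ring]).
    vlim_Ot. }
  assert (E : cross (Pc 0%nat) (omega m c (Kc 0%nat))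
              = vscal (Cpow 0 (n1 - 1)) (vscal (- RtoC (INR n2)) (Pc 0%nat))).
  { eapply (is_vlim_Ot_cancel_pow _ _ _ _ n1 1 r Hn1 r_pos); [|exact HXP | exact HY].
    intros t _. vec_ring. }
  destruct n1 as [|[|j]]; [lia| |].
  - split; [reflexivity|]. rewrite E. vec_ring.
  - exfalso. apply Hcross. rewrite cross_anticomm, E. vec_ring.
Qed.

Lemma pole_order_P_eq2 (n2 : nat) : (0 < n2)%nat ->
  laurent_on r 1 Kc Kf -> laurent_on r n2 Pc Pf ->
  cross (Pc 0%nat) (omega m c (Kc 0%nat)) = vscal (- RtoC (INR n2)) (Pc 0%nat) ->
  Kc 0%nat <> vzero -> Pc 0%nat <> vzero -> n2 = 2%nat.
Proof.
  intros Hn2 HK HP HPw HK0 HP0.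
  destruct (laurent_on_limits r 1 Kc Kf _ r_pos HK (fun t Ht => proj1 (solution t Ht)))
    as [HGK HXK].
  destruct (laurent_on_limits r n2 Pc Pf _ r_pos HP (fun t Ht => proj2 (solution t Ht)))
    as [HGP _].
  set (Z t := vadd (vscal (Cpow t 2) (rhsK m c a (Kf t) (Pf t)))
    (vscal (- 1) (cross (vscal (Cpow t 1) (Kf t)) (omega m c (vscal (Cpow t 1) (Kf t)))))).
  set (z := vscal (- 1) (vadd (Kc 0%nat) (cross (Kc 0%nat) (omega m c (Kc 0%nat))))).
  assert (HZ : is_vlim_Ot Z z).
  { replace z with (vadd (vscal (- RtoC (INR 1)) (Kc 0%nat))
      (vscal (- 1) (cross (Kc 0%nat) (omega m c (Kc 0%nat))))) by (unfold z; cbn [INR]; vec_ring).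
    unfold Z. vlim_Ot. }
  assert (HX : is_vlim_Ot (fun t => cross (vscal (Cpow t n2) (Pf t)) a) (cross (Pc 0%nat) a))
    by vlim_Ot.
  assert (Hid : forall t,
    vscal (Cpow t n2) (Z t) = vscal (Cpow t 2) (cross (vscal (Cpow t n2) (Pf t)) a))
    by (intros t; unfold Z; vec_ring).
  assert (Hz : z <> vzero).
  { intros E. apply HK0, (cross_omega_self_fixed m c), (vscal_eq_vzero (- 1)); [|exact E].
    intros H. apply (f_equal fst) in H. cbn in H. lra. }
  destruct (Req_dec (a1 * a1 + a2 * a2 + a3 * a3) 0) as [Ha | Ha].
  - exfalso. apply Hz.
    assert (a1 = 0 /\ a2 = 0 /\ a3 = 0) as (-> & -> & ->) by (repeat split; nra).
    apply (is_vlim_Ot_cancel_pow_eq Z (fun _ => vzero) _ _ n2 r r_pos);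
      [intros t _; rewrite Hid; vec_ring | exact HZ | apply is_vlim_Ot_const].
  - destruct n2 as [|[|[|j]]]; [lia | exfalso | reflexivity | exfalso].
    + apply Hz. eapply (is_vlim_Ot_cancel_pow_lt _ Z _ _ 2 1 r);
        [lia | exact r_pos | | exact HX | exact HZ].
      intros t _. symmetry. apply Hid.
    + apply HP0, (isotropic_cross_eq0 (Pc 0%nat) a).
      * apply (isotropic_of_cross_eigen _ (omega m c (Kc 0%nat)) (- RtoC (INR (S (S (S j))))));
          [apply Copp_INR_neq0; lia | exact HPw].
      * eapply (is_vlim_Ot_cancel_pow_lt Z _ _ _ (S (S (S j))) 2 r);
          [lia | exact r_pos | | exact HZ | exact HX].
        intros t _. apply Hid.
      * unfold dot. cbn [v1 v2 v3 vmk fst snd]. rewrite <- !RtoC_mult, <- !RtoC_plus.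
        intros E. apply (f_equal fst) in E. cbn in E. lra.
Qed.

End Solution.

Theorem lemma1 (k c m a1 a2 a3 : R) (n1 n2 : nat) (r : R)
  (Kf Pf : C -> vec) (Kc Pc : nat -> vec) :
  (k = 0 \/ k = 1 \/ k = -1) -> c <> 0 -> 0 <= m ->
  (0 < n1)%nat -> (0 < n2)%nat -> 0 < r ->
  (forall t : C, 0 < Cmod t < r ->
     @is_derive C_AbsRing VecNM Kf t
       (rhsK m c (vmk (RtoC a1) (RtoC a2) (RtoC a3)) (Kf t) (Pf t)) /\
     @is_derive C_AbsRing VecNM Pf t
       (rhsP k m c (vmk (RtoC a1) (RtoC a2) (RtoC a3)) (Kf t) (Pf t))) ->
  laurent_on r n1 Kc Kf -> laurent_on r n2 Pc Pf ->
  Kc 0%nat <> vzero -> Pc 0%nat <> vzero ->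
  cross (omega m c (Kc 0%nat)) (Pc 0%nat) <> vzero ->
  n1 = 1%nat /\ n2 = 2%nat.
Proof.
  intros _ _ _ Hn1 Hn2 Hr Hsol HK HP HK0 HP0 Hcross.
  destruct (pole_order_K_eq1 _ _ _ _ _ _ _ _ _ _ _ Hr Hsol n1 n2 Hn1 Hn2 HK HP Hcross)
    as [-> HPw].
  split; [reflexivity|].
  exact (pole_order_P_eq2 _ _ _ _ _ _ _ _ _ _ _ Hr Hsol n2 Hn2 HK HP HPw HK0 HP0).
Qed.
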